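(* Let $f\colon U\otimes V\rightarrow W$ be a multiplication and let $\alpha=(a\ b\ c)$ be a dimension vector for $f$. Then the representation variety $R(f,\alpha)$ has exactly one left general irreducible component.
   Context: Fix a ground field $k$. A multiplication is a linear map $f\colon U\otimes V\rightarrow W$ of finite dimensional $k$-vector spaces. A representation $R$ of $f$ consists of finite dimensional vector spaces $R(0),R(1),R(2)$ and linear maps $R(\phi_{01})\colon R(0)\otimes U\rightarrow R(1)$, $R(\phi_{12})\colon R(1)\otimes V\rightarrow R(2)$, $R(\phi_{02})\colon R(0)\otimes W\rightarrow R(2)$ with $R(\phi_{12})\circ(R(\phi_{01})\otimes I_V)=R(\phi_{02})\circ(I_{R(0)}\otimes f)$ as maps $R(0)\otimes U\otimes V\rightarrow R(2)$. Its dimension vector is $(\dim R(0)\ \dim R(1)\ \dim R(2))$. For $\alpha=(a\ b\ c)$, $R(f,\alpha)$ is the closed subvariety of $\mathrm{Hom}(k^a\otimes U,k^b)\times\mathrm{Hom}(k^b\otimes V,k^c)\times\mathrm{Hom}(k^a\otimes W,k^c)$ of triples satisfying this relation. A representation of the vector space $U$ of dimension vector $(a\ b)$ is a linear map $k^a\otimes U\rightarrow k^b$; these form the vector space $R(U,(a\ b))=\mathrm{Hom}(k^a\otimes U,k^b)$. There is a restriction morphism $R(f,\alpha)\rightarrow R(U,(a\ b))$, $(\phi_{01},\phi_{12},\phi_{02})\mapsto\phi_{01}$. An irreducible component $C$ of $R(f,\alpha)$ is called left general if the restriction of this morphism to $C$ is dominant. *)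

From HB Require Import structures.
From mathcomp Require Import all_boot all_algebra.
Set Implicit Arguments. Unset Strict Implicit. Unset Printing Implicit Defensive.
Import GRing.Theory.
Local Open Scope ring_scope.

Section Zariski.
Variable k : fieldType.
Variable I : finType.

Inductive polyfun : ((I -> k) -> k) -> Prop :=
  | polyfun_cst (c : k) : polyfun (fun _ => c)
  | polyfun_coord (i : I) : polyfun (fun x => x i)
  | polyfun_add p q : polyfun p -> polyfun q -> polyfun (fun x => p x + q x)
  | polyfun_mul p q : polyfun p -> polyfun q -> polyfun (fun x => p x * q x).

Definition subsetP (A B : (I -> k) -> Prop) := forall x, A x -> B x.

Definition zariski_closed (Z : (I -> k) -> Prop) : Prop :=
  exists S : ((I -> k) -> k) -> Prop,
    (forall p, S p -> polyfun p) /\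
    (forall x, Z x <-> (forall p, S p -> p x = 0)).

Definition irreducible (Y : (I -> k) -> Prop) : Prop :=
  (exists x, Y x) /\
  forall Z1 Z2, zariski_closed Z1 -> zariski_closed Z2 ->
    subsetP Y (fun x => Z1 x \/ Z2 x) -> subsetP Y Z1 \/ subsetP Y Z2.

Definition irreducible_component (X C : (I -> k) -> Prop) : Prop :=
  subsetP C X /\ irreducible C /\
  forall D, irreducible D -> subsetP C D -> subsetP D X -> subsetP D C.

Definition dense (A : (I -> k) -> Prop) : Prop :=
  forall Z, zariski_closed Z -> subsetP A Z -> forall x, Z x.

End Zariski.

(* Bases of U, V, W are fixed: dim U = u, dim V = v, dim W = w, and the
   multiplication f : U (x) V -> W is given by its structure constants
   f i j l = coefficient of e_l in f(e_i (x) e_j). *)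
Definition multiplication (k : fieldType) (u v w : nat) := 'I_u -> 'I_v -> 'I_w -> k.

(* Coordinates of the ambient space
   Hom(k^a (x) U, k^b) x Hom(k^b (x) V, k^c) x Hom(k^a (x) W, k^c):
   phi01 has entries indexed by (p, i, q) : 'I_a * 'I_u * 'I_b, meaning
   the e_q-coordinate of phi01(e_p (x) e_i); similarly for phi12, phi02. *)
Definition rep_index (u v w a b c : nat) : finType :=
  (('I_a * 'I_u * 'I_b) + ('I_b * 'I_v * 'I_c) + ('I_a * 'I_w * 'I_c))%type.

(* R(U, (a b)) = Hom(k^a (x) U, k^b) *)
Definition repU_index (u a b : nat) : finType := ('I_a * 'I_u * 'I_b)%type.

Section Reps.
Variables (k : fieldType) (u v w a b c : nat).
Implicit Type x : rep_index u v w a b c -> k.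

Definition phi01 x (p : 'I_a) (i : 'I_u) (q : 'I_b) : k := x (inl (inl (p, i, q))).
Definition phi12 x (q : 'I_b) (j : 'I_v) (r : 'I_c) : k := x (inl (inr (q, j, r))).
Definition phi02 x (p : 'I_a) (l : 'I_w) (r : 'I_c) : k := x (inr (p, l, r)).

(* R(f, alpha): phi12 o (phi01 (x) I_V) = phi02 o (I_{k^a} (x) f),
   checked on basis vectors e_p (x) e_i (x) e_j and the r-th coordinate. *)
Definition rep_variety (f : multiplication k u v w) : (rep_index u v w a b c -> k) -> Prop :=
  fun x => forall (p : 'I_a) (i : 'I_u) (j : 'I_v) (r : 'I_c),
    \sum_(q < b) phi01 x p i q * phi12 x q j r =
    \sum_(l < w) f i j l * phi02 x p l r.

Definition restrictU x : repU_index u a b -> k :=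
  fun t => phi01 x t.1.1 t.1.2 t.2.

Definition left_general (C : (rep_index u v w a b c -> k) -> Prop) : Prop :=
  dense (fun y : repU_index u a b -> k => exists x, C x /\ y = restrictU x).

End Reps.

(* For fixed phi01 the relation defining R(f, alpha) is a linear system in (phi12, phi02)
   whose matrix L(phi01) depends linearly on phi01. Let r be the maximal rank of L and pick
   an r x r minor g(phi01) = det (P L(phi01) Q) that is not identically zero. Where g does not
   vanish, t |-> g t - Q adj(P L Q) P L t maps onto ker L, so the part of R(f, alpha) over
   {g <> 0} is the image of a basic open subset of affine space under a polynomial map; its
   closure C is irreducible, and left general because {g <> 0} is dense. An irreducible left
   general D inside R(f, alpha) is covered by C and the closed set {g(phi01) = 0}, which cannot
   contain D since the projection of D is dense; hence D is contained in C, and C is the unique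
   left general component. *)

From Pilot Require Import Defs.
From mathcomp Require Import all_boot all_algebra zify.
From Stdlib Require Import FunctionalExtensionality Classical.
Set Implicit Arguments. Unset Strict Implicit. Unset Printing Implicit Defensive.
Import GRing.Theory.
Local Open Scope ring_scope.

Definition polymap (k : fieldType) (J I : finType) (G : (J -> k) -> I -> k) :=
  forall i, polyfun (fun z => G z i).

Definition polymx (k : fieldType) (I : finType) m n (A : (I -> k) -> 'M[k]_(m, n)) :=
  forall i j, polyfun (fun x => A x i j).

Section PolynomialFunctions.
Variables (k : fieldType) (I : finType).
Local Notation polyfun := (@polyfun k I).
Local Notation polymx := (@polymx k I).

Lemma polyfun_eq p q : polyfun p -> p =1 q -> polyfun q.
Proof. by move=> Pp /functional_extensionality <-. Qed.

Lemma polyfun_sub p q : polyfun p -> polyfun q -> polyfun (fun x => p x - q x).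
Proof.
move=> Pp Pq; apply: polyfun_eq (polyfun_add Pp (polyfun_mul (polyfun_cst _ (-1)) Pq)) _.
by move=> x; rewrite mulN1r.
Qed.

Lemma polyfun_sum (T : Type) (r : seq T) (P : pred T) (F : T -> (I -> k) -> k) :
  (forall i, P i -> polyfun (F i)) -> polyfun (fun x => \sum_(i <- r | P i) F i x).
Proof.
move=> PF; elim: r => [|i r IHr].
  by apply: polyfun_eq (polyfun_cst _ 0) _ => x; rewrite big_nil.
case Pi: (P i).
  by apply: polyfun_eq (polyfun_add (PF i Pi) IHr) _ => x; rewrite big_cons Pi.
by apply: polyfun_eq IHr _ => x; rewrite big_cons Pi.
Qed.

Lemma polyfun_prod (T : Type) (r : seq T) (P : pred T) (F : T -> (I -> k) -> k) :
  (forall i, P i -> polyfun (F i)) -> polyfun (fun x => \prod_(i <- r | P i) F i x).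
Proof.
move=> PF; elim: r => [|i r IHr].
  by apply: polyfun_eq (polyfun_cst _ 1) _ => x; rewrite big_nil.
case Pi: (P i).
  by apply: polyfun_eq (polyfun_mul (PF i Pi) IHr) _ => x; rewrite big_cons Pi.
by apply: polyfun_eq IHr _ => x; rewrite big_cons Pi.
Qed.

Lemma polyfun_comp (J : finType) (G : (J -> k) -> I -> k) p :
  polymap G -> polyfun p -> @Defs.polyfun k J (fun z => p (G z)).
Proof.
move=> PG; elim=> [c|i|{}p q _ Pp _ Pq|{}p q _ Pp _ Pq].
- exact: polyfun_cst.
- exact: PG.
- exact: polyfun_add.
- exact: polyfun_mul.
Qed.

Lemma polymx_const m n (B : 'M[k]_(m, n)) : polymx (fun _ => B).
Proof. by move=> i j; apply: polyfun_cst. Qed.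

Lemma polymx_mul m n p (A : (I -> k) -> 'M[k]_(m, n)) (B : (I -> k) -> 'M[k]_(n, p)) :
  polymx A -> polymx B -> polymx (fun x => A x *m B x).
Proof.
move=> PA PB i j; apply: (@polyfun_eq (fun x => \sum_l A x i l * B x l j)).
  by apply: polyfun_sum => l _; apply: polyfun_mul.
by move=> x; rewrite mxE.
Qed.

Lemma polymx_sub m n (A B : (I -> k) -> 'M[k]_(m, n)) :
  polymx A -> polymx B -> polymx (fun x => A x - B x).
Proof.
by move=> PA PB i j; apply: polyfun_eq (polyfun_sub (PA i j) (PB i j)) _ => x; rewrite !mxE.
Qed.

Lemma polymx_scale m n (s : (I -> k) -> k) (A : (I -> k) -> 'M[k]_(m, n)) :
  polyfun s -> polymx A -> polymx (fun x => s x *: A x).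
Proof. by move=> Ps PA i j; apply: polyfun_eq (polyfun_mul Ps (PA i j)) _ => x; rewrite mxE. Qed.

Lemma polyfun_det n (A : (I -> k) -> 'M[k]_n) : polymx A -> polyfun (fun x => \det (A x)).
Proof.
move=> PA; apply: polyfun_sum => s _; apply: polyfun_mul; first exact: polyfun_cst.
by apply: polyfun_prod => i _; apply: PA.
Qed.

Lemma polymx_adj n (A : (I -> k) -> 'M[k]_n) : polymx A -> polymx (fun x => \adj (A x)).
Proof.
move=> PA i j; apply: (@polyfun_eq (fun x => (-1) ^+ (j + i) * \det (row' j (col' i (A x))))).
  apply: polyfun_mul; first exact: polyfun_cst.
  by apply: polyfun_det => i' j'; apply: polyfun_eq (PA _ _) _ => x; rewrite !mxE.
by move=> x; rewrite mxE.
Qed.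

End PolynomialFunctions.

Section ZariskiClosure.
Variables (k : fieldType) (I : finType).
Implicit Types (X Y Z C : (I -> k) -> Prop) (x : I -> k).

Definition zariski_closure Y x :=
  forall p, polyfun p -> (forall y, Y y -> p y = 0) -> p x = 0.

Lemma zariski_closure_closed Y : zariski_closed (zariski_closure Y).
Proof.
exists (fun p => polyfun p /\ forall y, Y y -> p y = 0); split; first by move=> p [].
by move=> x; split=> [Yx p [Pp p0]|Yx p Pp p0]; apply: Yx.
Qed.

Lemma subset_zariski_closure Y : Defs.subsetP Y (zariski_closure Y).
Proof. by move=> x Yx p _; apply. Qed.

Lemma zariski_closure_min Y Z :
  zariski_closed Z -> Defs.subsetP Y Z -> Defs.subsetP (zariski_closure Y) Z.
Proof.
case=> S [PS SZ] YZ x clYx; apply/SZ => p Sp; apply: clYx; first exact: PS.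
by move=> y /YZ /SZ; apply.
Qed.

Lemma zariski_closed_zero p : polyfun p -> zariski_closed (fun x => p x = 0).
Proof.
move=> Pp; exists (eq p); split=> [_ <- //|x].
by split=> [px0 _ <- //|]; apply.
Qed.

Lemma zariski_closed_nonzero Z x : zariski_closed Z -> ~ Z x ->
  exists2 p, polyfun p & p x != 0 /\ forall y, Z y -> p y = 0.
Proof.
case=> S [PS SZ] Zx; apply: NNPP => no_p; apply/Zx/SZ => p Sp.
have [//|px_neq0] := eqVneq (p x) 0.
by case: no_p; exists p; [exact: PS | split=> // y /SZ; apply].
Qed.

Lemma dense_sub (Y Y' : (I -> k) -> Prop) : Defs.subsetP Y Y' -> dense Y -> dense Y'.
Proof. by move=> YY' dY Z cZ Y'Z; apply: dY cZ _ => x /YY' /Y'Z. Qed.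

Lemma greatest_irreducible_component (good : ((I -> k) -> Prop) -> Prop) X C :
  (forall D D', Defs.subsetP D D' -> good D -> good D') ->
  Defs.subsetP C X -> irreducible C -> good C ->
  (forall D, irreducible D -> Defs.subsetP D X -> good D -> Defs.subsetP D C) ->
  irreducible_component X C /\ good C /\
  forall C', irreducible_component X C' -> good C' -> forall x, C' x <-> C x.
Proof.
move=> good_sub CX irrC goodC C_greatest.
split.
  do 2!split=> //; move=> D irrD CD DX.
  by apply: C_greatest => //; apply: good_sub goodC.
split=> // C' [C'X [irrC' C'max]] goodC' x; split; first exact: C_greatest.
exact: C'max (C_greatest _ irrC' C'X goodC') _ _.
Qed.

End ZariskiClosure.

Section PolynomialFunctionsOnLines.
Variables (k : closedFieldType) (I : finType).
Local Notation polyfun := (@polyfun k I).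

Lemma polyfun_on_line p (z1 z2 : I -> k) : polyfun p ->
  exists P : {poly k}, forall s, p (fun i => z1 i + s * (z2 i - z1 i)) = P.[s].
Proof.
elim=> [c|i|{}p q _ [P Pp] _ [Q Pq]|{}p q _ [P Pp] _ [Q Pq]].
- by exists c%:P => s; rewrite hornerC.
- by exists ((z1 i)%:P + 'X * (z2 i - z1 i)%:P) => s; rewrite !hornerE.
- by exists (P + Q) => s; rewrite hornerD Pp Pq.
- by exists (P * Q) => s; rewrite hornerM Pp Pq.
Qed.

(* On the line through [z1] and [z2], [p * q] is a nonzero polynomial, so it has a nonroot. *)
Lemma polyfun_common_nonzero p q (z1 z2 : I -> k) : polyfun p -> polyfun q ->
  p z1 != 0 -> q z2 != 0 -> exists z, p z != 0 /\ q z != 0.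
Proof.
move=> Pp Pq pz1 qz2.
have [P Pp_line] := polyfun_on_line z1 z2 Pp.
have [Q Pq_line] := polyfun_on_line z1 z2 Pq.
have line0 : (fun i => z1 i + 0 * (z2 i - z1 i)) = z1.
  by apply: functional_extensionality => i; rewrite mul0r addr0.
have line1 : (fun i => z1 i + 1 * (z2 i - z1 i)) = z2.
  by apply: functional_extensionality => i; rewrite mul1r addrC subrK.
have P_neq0 : P != 0 by apply: contraNneq pz1 => P0; rewrite -line0 Pp_line P0 horner0.
have Q_neq0 : Q != 0 by apply: contraNneq qz2 => Q0; rewrite -line1 Pq_line Q0 horner0.
have /closed_nonrootP [s] : P * Q != 0 by rewrite mulf_neq0.
rewrite /root hornerM mulf_eq0 negb_or => /andP[Ps Qs].
by exists (fun i => z1 i + s * (z2 i - z1 i)); rewrite Pp_line Pq_line.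
Qed.

End PolynomialFunctionsOnLines.

Section ClosedFieldTopology.
Variables (k : closedFieldType) (I : finType).
Local Notation polyfun := (@polyfun k I).

Lemma dense_nonzero g x0 : polyfun g -> g x0 != 0 -> dense (fun x => g x != 0).
Proof.
move=> Pg gx0 Z [S [PS SZ]] gZ x; apply/SZ => p Sp.
have [//|px] := eqVneq (p x) 0.
have [y [gy py]] := polyfun_common_nonzero Pg (PS p Sp) gx0 px.
by move: py; rewrite (proj1 (SZ y) (gZ y gy) p Sp) eqxx.
Qed.

Lemma irreducible_closure_image (J : finType) (G : (J -> k) -> I -> k) g z0 :
  polymap G -> @Defs.polyfun k J g -> g z0 != 0 ->
  irreducible (zariski_closure (fun x => exists2 z, g z != 0 & x = G z)).
Proof.
move=> PG Pg gz0; split; first by exists (G z0); apply: subset_zariski_closure; exists z0.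
move=> Z1 Z2 cZ1 cZ2 cover.
case: (classic (exists z, g z != 0 /\ ~ Z1 (G z))) => [[z1 [gz1 nZ1]]|no1]; last first.
  left; apply: zariski_closure_min => // _ [z gz ->].
  by apply: NNPP => nZ1; apply: no1; exists z.
case: (classic (exists z, g z != 0 /\ ~ Z2 (G z))) => [[z2 [gz2 nZ2]]|no2]; last first.
  right; apply: zariski_closure_min => // _ [z gz ->].
  by apply: NNPP => nZ2; apply: no2; exists z.
have [p1 Pp1 [p1z1 p1Z1]] := zariski_closed_nonzero cZ1 nZ1.
have [p2 Pp2 [p2z2 p2Z2]] := zariski_closed_nonzero cZ2 nZ2.
have [z []] := polyfun_common_nonzero (polyfun_mul Pg (polyfun_comp PG Pp1))
  (polyfun_comp PG Pp2) (mulf_neq0 gz1 p1z1) p2z2.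
rewrite mulf_eq0 negb_or => /andP[gz p1z] p2z.
have : zariski_closure (fun x => exists2 z, g z != 0 & x = G z) (G z).
  by apply: subset_zariski_closure; exists z.
by case/cover=> [/p1Z1 | /p2Z2] p0; [move: p1z | move: p2z]; rewrite p0 eqxx.
Qed.

End ClosedFieldTopology.

Lemma exists_argmax_bounded (T : Type) (h : T -> nat) (n : nat) (x0 : T) :
  (forall x, (h x <= n)%N) -> exists y, forall x, (h x <= h y)%N.
Proof.
move=> h_le; suff max_above d x : (n - h x <= d)%N -> exists y, forall x, (h x <= h y)%N.
  exact: (max_above n x0 (leq_subr _ _)).
elim: d x => [|d IHd] x gap.
  by exists x => x'; apply: leq_trans (h_le x') _; rewrite -subn_eq0 -leqn0.
have [[x' hxx']|no_larger] := classic (exists x', (h x < h x')%N).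
  by apply: (IHd x'); have := h_le x'; lia.
by exists x => x'; rewrite leqNgt; apply/negP => hx'x; apply: no_larger; exists x'.
Qed.

Lemma exists_unit_minor (k : fieldType) m n (A : 'M[k]_(m, n)) :
  exists (P : 'M_(\rank A, m)) (Q : 'M_(n, \rank A)), P *m A *m Q = 1%:M.
Proof.
have := mulmx_ebase A; set rk := \rank A => ebaseA.
exists (pid_mx rk *m invmx (col_ebase A)), (invmx (row_ebase A) *m pid_mx rk).
rewrite -{2}ebaseA !mulmxA mulmxKV ?col_ebase_unit //.
rewrite mulmxK ?row_ebase_unit // !mul_pid_mx.
by rewrite (_ : minn _ _ = rk) ?pid_mx_1 //; have := rank_leq_col A; have := rank_leq_row A; lia.
Qed.

Section KernelParametrization.
Variables (k : fieldType) (m n r : nat) (P : 'M[k]_(r, m)) (Q : 'M[k]_(n, r)).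
Implicit Type A : 'M[k]_(m, n).

(* As [\rank A <= r = \rank (P *m A *m Q)], the rows of [A] lie in the row space of [P *m A]. *)
Lemma mul_mx_adj_minor A : (\rank A <= r)%N -> \det (P *m A *m Q) != 0 ->
  A *m Q *m \adj (P *m A *m Q) *m P *m A = \det (P *m A *m Q) *: A.
Proof.
move=> rankA det_neq0.
have unitM : P *m A *m Q \in unitmx by rewrite unitmxE unitfE.
have rankPA : (r <= \rank (P *m A))%N by rewrite -{1}(mxrank_unit unitM) mxrankM_maxl.
have [leA eqA] := mxrank_leqif_sup (submxMl P A).
have /submxP [X defA] : (A <= P *m A)%MS by rewrite -eqA eqn_leq leA (leq_trans rankA).
have -> : A *m Q = X *m (P *m A *m Q) by rewrite {1}defA !mulmxA.
by rewrite -(mulmxA X) mul_mx_adj mul_mx_scalar -!scalemxAl -[X *m P *m A]mulmxA -defA.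
Qed.

Definition ker_param A (t : 'cV[k]_n) : 'cV[k]_n :=
  \det (P *m A *m Q) *: t - Q *m \adj (P *m A *m Q) *m P *m A *m t.

Lemma mulmx_ker_param A t : (\rank A <= r)%N -> \det (P *m A *m Q) != 0 ->
  A *m ker_param A t = 0.
Proof.
move=> rankA det_neq0; rewrite mulmxBr -scalemxAr !mulmxA.
by rewrite mul_mx_adj_minor // -scalemxAl subrr.
Qed.

Lemma ker_paramK A y : \det (P *m A *m Q) != 0 -> A *m y = 0 ->
  ker_param A ((\det (P *m A *m Q))^-1 *: y) = y.
Proof.
move=> det_neq0 Ay0; rewrite /ker_param scalerA mulfV // scale1r -scalemxAr.
by rewrite -[_ *m A *m y]mulmxA Ay0 mulmx0 scaler0 subr0.
Qed.

Lemma polyfun_det_minor (I : finType) (A : (I -> k) -> 'M[k]_(m, n)) :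
  polymx A -> polyfun (fun x => \det (P *m A x *m Q)).
Proof.
by move=> PA; apply/polyfun_det/polymx_mul/polymx_const/polymx_mul/PA/polymx_const.
Qed.

Lemma polymx_ker_param (I : finType) (A : (I -> k) -> 'M[k]_(m, n)) (t : (I -> k) -> 'cV[k]_n) :
  polymx A -> polymx t -> polymx (fun x => ker_param (A x) (t x)).
Proof.
move=> PA Pt; apply: polymx_sub; first exact/polymx_scale/Pt/polyfun_det_minor.
apply/polymx_mul/Pt/polymx_mul/PA/polymx_mul/polymx_const.
by apply/polymx_mul/polymx_adj/polymx_mul/polymx_const/polymx_mul/PA/polymx_const/polymx_const.
Qed.

End KernelParametrization.

Lemma big_triple (R : Type) (idx : R) (op : Monoid.com_law idx) (A B C : finType)
    (F : A * B * C -> R) :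
  \big[op/idx]_s F s = \big[op/idx]_x \big[op/idx]_y \big[op/idx]_z F (x, y, z).
Proof. by rewrite !pair_bigA; apply: eq_bigr => -[[]]. Qed.

Section LinearSystem.
Variables (k : fieldType) (u v w : nat) (f : multiplication k u v w) (a b c : nat).
Local Notation T := (rep_index u v w a b c).
Local Notation RU := (repU_index u a b).

Definition eqn_index : finType := ('I_a * 'I_u * 'I_v * 'I_c)%type.
Definition unknown_index : finType := ('I_b * 'I_v * 'I_c + 'I_a * 'I_w * 'I_c)%type.
Local Notation neqn := #|eqn_index|.
Local Notation nunk := #|unknown_index|.

(* Row [(p, i, j, r)] is the equation of [rep_variety] at [(p, i, j, r)]; the unknowns are
   the coordinates of [phi12] and [phi02]. *)
Definition rep_system_entry (phi : RU -> k) (e : eqn_index) (y : unknown_index) : k :=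
  let: (p, i, j, r) := e in
  match y with
  | inl (q, j', r') => if (j' == j) && (r' == r) then phi (p, i, q) else 0
  | inr (p', l, r') => if (p' == p) && (r' == r) then - f i j l else 0
  end.

Definition rep_system (phi : RU -> k) : 'M[k]_(neqn, nunk) :=
  \matrix_(e, y) rep_system_entry phi (enum_val e) (enum_val y).

Definition unknown_coord (y : unknown_index) : T :=
  match y with inl s => inl (inr s) | inr s => inr s end.

Definition unknowns (x : T -> k) : 'cV[k]_nunk := \col_i x (unknown_coord (enum_val i)).

Definition rep_of (phi : RU -> k) (y : 'cV[k]_nunk) (t : T) : k :=
  match t with
  | inl (inl s) => phi s
  | inl (inr s) => y (enum_rank (inl s : unknown_index)) 0
  | inr s => y (enum_rank (inr s : unknown_index)) 0
  end.

Lemma restrictU_rep_of phi y : restrictU (rep_of phi y) = phi.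
Proof. by apply: functional_extensionality => -[[]]. Qed.

Lemma unknowns_rep_of phi y : unknowns (rep_of phi y) = y.
Proof.
apply/matrixP => i j; rewrite (ord1 j) mxE.
by case E: (enum_val i) => [s|s] /=; rewrite -E enum_valK.
Qed.

Lemma rep_of_restrictU x : rep_of (restrictU x) (unknowns x) = x.
Proof.
by apply: functional_extensionality => -[[[[p i] q]|s]|s] //=; rewrite mxE enum_rankK.
Qed.

Lemma mul_rep_system_unknowns phi x e :
  (rep_system phi *m unknowns x) e 0 =
  \sum_(y : unknown_index) rep_system_entry phi (enum_val e) y * x (unknown_coord y).
Proof.
rewrite mxE (reindex (@enum_val unknown_index predT)) /=; last exact/onW_bij/enum_val_bij.
by apply: eq_bigr => y _; rewrite !mxE.
Qed.

Lemma rep_system_unknownsE x p i j r :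
  (rep_system (restrictU x) *m unknowns x) (enum_rank ((p, i, j, r) : eqn_index)) 0 =
  \sum_q phi01 x p i q * phi12 x q j r - \sum_l f i j l * phi02 x p l r.
Proof.
rewrite mul_rep_system_unknowns enum_rankK big_sumType /= !big_triple -sumrN.
congr (_ + _).
  apply: eq_bigr => q _; rewrite (bigD1 j) //= [X in _ + X]big1 ?addr0 => [|j' /negbTE j'j].
    rewrite (bigD1 r) //= [X in _ + X]big1 ?eqxx ?addr0 // => r' /negbTE r'r.
    by rewrite r'r andbF mul0r.
  by apply: big1 => r' _; rewrite j'j mul0r.
rewrite (bigD1 p) //= [X in _ + X]big1 ?addr0 => [|p' /negbTE p'p].
  apply: eq_bigr => l _.
  rewrite (bigD1 r) //= [X in _ + X]big1 ?eqxx ?addr0 ?mulNr // => r' /negbTE r'r.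
  by rewrite r'r andbF mul0r.
by apply: big1 => l _; apply: big1 => r' _; rewrite p'p mul0r.
Qed.

Lemma rep_varietyE x : rep_variety f x <-> rep_system (restrictU x) *m unknowns x = 0.
Proof.
split=> [Rx | Lx0 p i j r].
  apply/matrixP => e z; rewrite (ord1 z) [RHS]mxE -[e]enum_valK.
  by case: (enum_val e) => [[[p i] j] r]; rewrite rep_system_unknownsE Rx subrr.
by apply/eqP; rewrite -subr_eq0 -rep_system_unknownsE Lx0 mxE.
Qed.

Lemma polymx_rep_system (J : finType) (G : (J -> k) -> RU -> k) :
  polymap G -> polymx (fun z => rep_system (G z)).
Proof.
move=> PG e y.
apply: (@polyfun_eq _ _ (fun z => rep_system_entry (G z) (enum_val e) (enum_val y))).
  case: (enum_val e) => [[[p i] j] r].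
  case: (enum_val y) => [[[q j'] r']|[[p' l] r']] /=.
    by case: (_ && _); [apply: PG | apply: polyfun_cst].
  by case: (_ && _); apply: polyfun_cst.
by move=> z; rewrite mxE.
Qed.

Lemma polymx_unknowns : polymx unknowns.
Proof. by move=> i j; apply: polyfun_eq (polyfun_coord _ _) _ => x; rewrite mxE. Qed.

Lemma polymap_restrictU : polymap (@restrictU k u v w a b c).
Proof. by move=> [[p i] q]; apply: (polyfun_coord _ (inl (inl (p, i, q)))). Qed.

Lemma polymap_rep_of (J : finType) (G : (J -> k) -> RU -> k) (Y : (J -> k) -> 'cV[k]_nunk) :
  polymap G -> polymx Y -> polymap (fun z => rep_of (G z) (Y z)).
Proof. by move=> PG PY [[s|s]|s]; [apply: PG | apply: PY | apply: PY]. Qed.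

Lemma rep_variety_closed : zariski_closed (@rep_variety k u v w a b c f).
Proof.
exists (fun p => exists e, p = fun x => (rep_system (restrictU x) *m unknowns x) e 0); split.
  by move=> _ [e ->]; apply: polymx_mul (polymx_rep_system polymap_restrictU) polymx_unknowns _ _.
move=> x; rewrite rep_varietyE; split=> [Lx0 _ [e ->] | Lx0]; first by rewrite Lx0 mxE.
apply/matrixP => e j; rewrite (ord1 j) [RHS]mxE.
by apply: (Lx0 (fun y => (rep_system (restrictU y) *m unknowns y) e 0)); exists e.
Qed.

End LinearSystem.

Section LeftGeneralComponent.
Variables (k : closedFieldType) (u v w : nat) (f : multiplication k u v w) (a b c : nat).
Local Notation T := (rep_index u v w a b c).
Local Notation RU := (repU_index u a b).
Local Notation X := (@rep_variety k u v w a b c f).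
Local Notation nunk := #|unknown_index v w a b c|.
Local Notation system := (@rep_system k u v w f a b c).

Variables (r : nat) (P : 'M[k]_(r, #|eqn_index u v a c|)) (Q : 'M[k]_(nunk, r)) (phi0 : RU -> k).
Hypothesis rank_system_le : forall phi, (\rank (system phi) <= r)%N.
Hypothesis minor_phi0 : \det (P *m system phi0 *m Q) != 0.

Definition minor_det (phi : RU -> k) := \det (P *m system phi *m Q).

Definition param_base (z : RU + 'I_nunk -> k) : RU -> k := fun s => z (inl s).
Definition param_fiber (z : RU + 'I_nunk -> k) : 'cV[k]_nunk := \col_i z (inr i).

Definition param_rep (z : RU + 'I_nunk -> k) : T -> k :=
  rep_of (param_base z) (ker_param P Q (system (param_base z)) (param_fiber z)).

Definition generic_component : (T -> k) -> Prop :=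
  zariski_closure (fun x => exists2 z, minor_det (param_base z) != 0 & x = param_rep z).

Lemma polymap_param_base : polymap param_base.
Proof. by move=> s; apply: polyfun_coord. Qed.

Lemma polyfun_minor_det : polyfun minor_det.
Proof. by apply/polyfun_det_minor/polymx_rep_system => s; apply: polyfun_coord. Qed.

Lemma polymap_param_rep : polymap param_rep.
Proof.
apply: polymap_rep_of polymap_param_base _.
apply: polymx_ker_param; first exact/polymx_rep_system/polymap_param_base.
by move=> i j; apply: polyfun_eq (polyfun_coord _ (inr i)) _ => z; rewrite mxE.
Qed.

Lemma param_rep_in_variety z : minor_det (param_base z) != 0 -> X (param_rep z).
Proof.
by move=> det_neq0; apply/rep_varietyE; rewrite restrictU_rep_of unknowns_rep_of mulmx_ker_param.
Qed.

Lemma rep_variety_param x : X x -> minor_det (restrictU x) != 0 ->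
  exists2 z, minor_det (param_base z) != 0 & x = param_rep z.
Proof.
move=> Xx det_neq0.
pose z (j : RU + 'I_nunk) := match j with
  | inl s => restrictU x s
  | inr i => ((minor_det (restrictU x))^-1 *: unknowns x) i 0 end.
exists z => //; rewrite /param_rep.
have -> : param_fiber z = (minor_det (restrictU x))^-1 *: unknowns x.
  by apply/matrixP => i j; rewrite mxE (ord1 j).
by rewrite ker_paramK ?rep_of_restrictU //; apply/rep_varietyE.
Qed.

Lemma generic_component_sub : Defs.subsetP generic_component X.
Proof.
apply: zariski_closure_min; first exact: rep_variety_closed.
by move=> _ [z det_neq0 ->]; apply: param_rep_in_variety.
Qed.

Lemma irreducible_generic_component : irreducible generic_component.
Proof.
pose z0 (j : RU + 'I_nunk) := match j with inl s => phi0 s | inr _ => 0 end.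
apply: (irreducible_closure_image (z0 := z0)) polymap_param_rep _ _ => //.
exact: polyfun_comp polymap_param_base polyfun_minor_det.
Qed.

Lemma left_general_generic_component : left_general generic_component.
Proof.
apply: dense_sub (dense_nonzero polyfun_minor_det minor_phi0) => phi det_neq0.
pose z (j : RU + 'I_nunk) := match j with inl s => phi s | inr _ => 0 end.
exists (param_rep z); split; last by rewrite restrictU_rep_of.
by apply: subset_zariski_closure; exists z.
Qed.

Lemma left_general_sub_generic_component D :
  irreducible D -> Defs.subsetP D X -> left_general D -> Defs.subsetP D generic_component.
Proof.
move=> [_ irrD] DX lgD.
have Pdet := polyfun_comp (@polymap_restrictU k u v w a b c) polyfun_minor_det.
have cover : Defs.subsetP D (fun x => generic_component x \/ minor_det (restrictU x) = 0).
  move=> x Dx; have [|det_neq0] := eqVneq (minor_det (restrictU x)) 0; first by right.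
  by left; apply: subset_zariski_closure; apply: rep_variety_param => //; apply: DX.
have [//|D_det0] := irrD _ _ (zariski_closure_closed _) (zariski_closed_zero Pdet) cover.
have : minor_det phi0 != 0 := minor_phi0.
rewrite (lgD _ (zariski_closed_zero polyfun_minor_det)) ?eqxx //.
by move=> _ [x [Dx ->]]; apply: D_det0.
Qed.

Lemma unique_left_general_component :
  exists C : (T -> k) -> Prop,
    irreducible_component X C /\ left_general C /\
    forall C', irreducible_component X C' -> left_general C' -> forall x, C' x <-> C x.
Proof.
exists generic_component; apply: greatest_irreducible_component.
- by move=> D D' DD'; apply: dense_sub => _ [x [Dx ->]]; exists x; split; [apply: DD' |].
- exact: generic_component_sub.
- exact: irreducible_generic_component.
- exact: left_general_generic_component.
- exact: left_general_sub_generic_component.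
Qed.

End LeftGeneralComponent.

Theorem lemma3p1 (k : closedFieldType) (u v w : nat) (f : multiplication k u v w)
    (a b c : nat) :
  exists C : (rep_index u v w a b c -> k) -> Prop,
    irreducible_component (@rep_variety k u v w a b c f) C /\ left_general C /\
    forall C' : (rep_index u v w a b c -> k) -> Prop,
      irreducible_component (@rep_variety k u v w a b c f) C' -> left_general C' ->
      forall x, C' x <-> C x.
Proof.
have [phi0 rank_max] := exists_argmax_bounded (fun _ => 0)
  (fun phi : repU_index u a b -> k => rank_leq_row (rep_system f c phi)).
have [P [Q minor1]] := exists_unit_minor (rep_system f c phi0).
apply: (unique_left_general_component (P := P) (Q := Q) (phi0 := phi0) rank_max).
by rewrite minor1 det1 oner_neq0.
Qed.
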